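(* Let $A$ be a finite alphabet and let $f : A^* \to \mathbb{N}$ be a polyblind function. Then $f$ is $k$-repetitive for every integer $k \ge 1$.
   Context: A bimachine is a tuple $(A, M, \mu, \lambda)$ where $A$ is a finite alphabet, $M$ a finite monoid, $\mu : A^* \to M$ a monoid morphism and $\lambda : M \times A \times M \to \mathbb{N}$; it computes $f(w) = \sum_{i=1}^{|w|} \lambda(\mu(w[1{:}i-1]), w[i], \mu(w[i+1{:}|w|]))$. A function $A^* \to \mathbb{N}$ is regular if it is computed by a bimachine. The polyblind functions are the smallest class of functions $A^* \to \mathbb{N}$ containing the regular functions and closed under sum $f+g$ and Hadamard (pointwise) product $(f \cdot g)(w) = f(w) g(w)$. For $k \ge 1$, a function $f : A^* \to \mathbb{N}$ is $k$-repetitive if there exists an integer $\omega_0 \ge 1$ such that for all words $\alpha, \beta, \alpha_0, u_1, \alpha_1, \dots, u_k, \alpha_k \in A^*$ and every positive multiple $\omega$ of $\omega_0$, setting $W(Z_1,\dots,Z_k) = \alpha_0 \prod_{i=1}^k u_i^{\omega Z_i} \alpha_i$ and $w = W(1,\dots,1)$, there exists a function $F : \mathbb{N}^k \to \mathbb{N}$ such that for all integers $X_1,\dots,X_k,Y_1,\dots,Y_k \ge 3$, $f(\alpha\, w^{2\omega-1} W(X_1,\dots,X_k)\, w^{\omega-1}\, W(Y_1,\dots,Y_k)\, w^{\omega}\, \beta) = F(X_1+Y_1, \dots, X_k+Y_k)$. *)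

From mathcomp Require Import all_boot.
Set Implicit Arguments. Unset Strict Implicit. Unset Printing Implicit Defensive.

Section Defs.
Variable A : finType.

Definition wpow (u : seq A) (n : nat) : seq A := flatten (nseq n u).

Definition is_monoid (M : finType) (mul : M -> M -> M) (one : M) : Prop :=
  [/\ associative mul, left_id one mul & right_id one mul].

Definition is_monoid_morphism (M : finType) (mul : M -> M -> M) (one : M)
  (mu : seq A -> M) : Prop :=
  mu [::] = one /\ forall u v, mu (u ++ v) = mul (mu u) (mu v).

Definition bimachine_fun (M : finType) (mu : seq A -> M)
  (lam : M -> A -> M -> nat) (w : seq A) : nat :=
  \sum_(i < size w) lam (mu (take i w)) (tnth (in_tuple w) i) (mu (drop i.+1 w)).

Definition regular (f : seq A -> nat) : Prop :=
  exists (M : finType) (mul : M -> M -> M) (one : M) (mu : seq A -> M)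
         (lam : M -> A -> M -> nat),
    is_monoid mul one /\ is_monoid_morphism mul one mu /\
    forall w, f w = bimachine_fun mu lam w.

Inductive polyblind : (seq A -> nat) -> Prop :=
  | pb_reg f : regular f -> polyblind f
  | pb_add f g : polyblind f -> polyblind g -> polyblind (fun w => f w + g w)
  | pb_mul f g : polyblind f -> polyblind g -> polyblind (fun w => f w * g w).

(* W(Z_1..Z_k) = alpha_0 prod_{i=1}^k u_i^{omega Z_i} alpha_i,
   with u i = u_{i+1}, al i = alpha_{i+1} for i : 'I_k. *)
Definition Wword (k : nat) (om : nat) (al0 : seq A) (u al : 'I_k -> seq A)
  (Z : 'I_k -> nat) : seq A :=
  al0 ++ flatten [seq wpow (u i) (om * Z i) ++ al i | i <- enum 'I_k].

Definition k_repetitive (k : nat) (f : seq A -> nat) : Prop :=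
  exists2 om0 : nat, 1 <= om0 &
  forall (alpha beta al0 : seq A) (u al : 'I_k -> seq A) (om : nat),
    0 < om -> om0 %| om ->
    let W := Wword om al0 u al in
    let w := W (fun _ => 1) in
    exists F : {ffun 'I_k -> nat} -> nat,
      forall X Y : {ffun 'I_k -> nat},
        (forall i, 3 <= X i) -> (forall i, 3 <= Y i) ->
        f (alpha ++ wpow w (2 * om - 1) ++ W X ++ wpow w (om - 1)
              ++ W Y ++ wpow w om ++ beta)
        = F [ffun i => X i + Y i].

End Defs.

From mathcomp Require Import all_boot zify.
Set Implicit Arguments. Unset Strict Implicit. Unset Printing Implicit Defensive.

(* A bimachine has a finite monoid M; for om a positive multiple of #|M|`!, every
   power m^om is idempotent and m^(n + om) = m^n once n >= om.  So inserting one more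
   block u_i^om into a run u_i^(om * X_i) with X_i >= 2 adds to the value of the
   bimachine a term that only depends on the images in M of the left and right
   contexts of the run.  These images are the same for the i-th run of W(X) and of
   W(Y), because the powers of w around them absorb one extra factor w.  Hence
   moving one block from X_i to Y_i does not change f; this property is preserved
   by sums and products, and moving all surplus blocks into Y shows that f only
   depends on X + Y. *)

Lemma iter_cycle (T : finType) (h : T -> T) x :
  exists a p, [/\ a <= #|T|, 0 < p <= #|T| & iter (p + a) h x = iter a h x].
Proof.
have /injectivePn[i [j neq_ij eq_ij]] : ~~ injectiveb (fun i : 'I_#|T|.+1 => iter i h x).
  by apply/injectiveP => /leq_card; rewrite card_ord ltnn.
have lt_i := ltn_ord i; have lt_j := ltn_ord j.
have cycle_at a b : a < b <= #|T| -> iter a h x = iter b h x ->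
    exists a p, [/\ a <= #|T|, 0 < p <= #|T| & iter (p + a) h x = iter a h x].
  move=> lt_ab eq_ab; exists a, (b - a); split; [lia | lia |].
  by rewrite subnK ?eq_ab //; lia.
case: (ltngtP i j) => [lt_ij | lt_ji | /val_inj eq_ij'].
- by apply: (cycle_at i j) => //; lia.
- by apply: (cycle_at j i) => //; lia.
- by rewrite eq_ij' eqxx in neq_ij.
Qed.

Lemma iter_periodic (T : finType) (h : T -> T) x d n :
  #|T|`! %| d -> #|T| <= n -> iter (d + n) h x = iter n h x.
Proof.
have [a [p [le_a p_range cyc]]] := iter_cycle h x.
have step m : a <= m -> iter (p + m) h x = iter m h x.
  by move=> le_am; rewrite -(subnK le_am) addnCA !(iterD (m - a)) cyc.
move=> /(dvdn_trans (dvdn_fact p_range))/dvdnP[c ->] le_n.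
elim: c => [|c IH] //.
by rewrite mulSn -addnA step ?IH //; lia.
Qed.

Section Transfer.
Variables (I : finType) (T : Type) (c : nat).

Definition incr (i : I) (Z : {ffun I -> nat}) : {ffun I -> nat} := [ffun j => Z j + (j == i)].

Definition transfer_invariant (g : {ffun I -> nat} -> {ffun I -> nat} -> T) :=
  forall i (X Y : {ffun I -> nat}), (forall j, c <= X j) -> (forall j, c <= Y j) ->
  g (incr i X) Y = g X (incr i Y).

Lemma transfer_invariant_sum g : transfer_invariant g ->
  forall X Y : {ffun I -> nat}, (forall j, c <= X j) -> (forall j, c <= Y j) ->
  g X Y = g [ffun=> c] [ffun j => X j + Y j - c].
Proof.
move=> inv X Y; have [n] := ubnP (\sum_j (X j - c)).
elim: n X Y => // n IH X Y lt_sum cX cY.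
case: (pickP (fun j => c < X j)) => [j /= lt_cXj | X_eq_c]; last first.
  have cXE l : X l = c by have := X_eq_c l; have := cX l; rewrite /=; lia.
  by congr g; apply/ffunP => l; rewrite !ffunE cXE; [|lia].
pose X' := [ffun l => X l - (l == j)].
have XE : X = incr j X'.
  by apply/ffunP => l; rewrite !ffunE; case: eqP => [->|] /=; lia.
have cX' l : c <= X' l by rewrite ffunE; case: eqP => [->|] /=; have := cX l; lia.
have cincrY l : c <= incr j Y l by rewrite ffunE; have := cY l; lia.
have sum_lt : \sum_l (X' l - c) < n.
  move: lt_sum; rewrite (bigD1 j) // [X in _ -> X < n](bigD1 j) //= ffunE eqxx.
  have sum_eq : \sum_(l | l != j) (X' l - c) = \sum_(l | l != j) (X l - c).
    by apply: eq_bigr => l /negbTE ne_lj; rewrite ffunE ne_lj subn0.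
  rewrite sum_eq; lia.
rewrite XE inv // IH //; congr g; apply/ffunP => l; rewrite !ffunE.
by case: eqP => [->|] /=; lia.
Qed.

End Transfer.

Section FiniteMonoid.
Variables (M : finType) (mul : M -> M -> M) (one : M).
Hypotheses (mulA : associative mul) (mul1m : left_id one mul) (mulm1 : right_id one mul).

Definition mpow (m : M) n := iter n (mul m) one.

Lemma mpowD m a b : mpow m (a + b) = mul (mpow m a) (mpow m b).
Proof. by elim: a => [|a IH]; rewrite ?mul1m // addSn /mpow !iterS -/(mpow _ _) IH mulA. Qed.

Lemma mpowSr m n : mpow m n.+1 = mul (mpow m n) m.
Proof. by rewrite -addn1 mpowD /mpow /= mulm1. Qed.

Variable om : nat.
Hypotheses (om_gt0 : 0 < om) (fact_dvd_om : #|M|`! %| om).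

Lemma mpow_period m n : om <= n -> mpow m (om + n) = mpow m n.
Proof.
move=> le_om_n; apply: iter_periodic fact_dvd_om _.
exact: leq_trans (fact_geq _) (leq_trans (dvdn_leq om_gt0 fact_dvd_om) le_om_n).
Qed.

Lemma mpow_absorb m n : om <= n -> mul (mpow m n) (mpow m om) = mpow m n.
Proof. by move=> le_om_n; rewrite -mpowD addnC mpow_period. Qed.

Lemma mpow_idem m : mul (mpow m om) (mpow m om) = mpow m om.
Proof. exact: mpow_absorb. Qed.

Lemma mul_mpow_subn1 m : mul m (mpow m (om - 1)) = mpow m om.
Proof. by rewrite -[in RHS](prednK om_gt0) subn1. Qed.

Lemma mpow_subn1_mul m : mul (mpow m (om - 1)) m = mpow m om.
Proof. by rewrite -mpowSr subn1 prednK. Qed.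

Lemma mpow_mulnS m z : mpow m (om * z.+1) = mpow m om.
Proof.
elim: z => [|z IH]; first by rewrite muln1.
by rewrite mulnS mpow_period ?IH // leq_pmulr.
Qed.

End FiniteMonoid.

Section TestWord.
Variables (A : finType) (k om : nat) (al0 : seq A) (u al : 'I_k -> seq A).

Lemma wpowD (v : seq A) a b : wpow v (a + b) = wpow v a ++ wpow v b.
Proof. by rewrite /wpow nseqD flatten_cat. Qed.

Local Notation W := (Wword om al0 u al).
Local Notation w := (W (fun _ => 1)).

Definition rep_word (alpha beta : seq A) (X Y : 'I_k -> nat) :=
  alpha ++ wpow w (2 * om - 1) ++ W X ++ wpow w (om - 1) ++ W Y ++ wpow w om ++ beta.

Definition blocks (Z : 'I_k -> nat) (s : seq 'I_k) :=
  flatten [seq wpow (u j) (om * Z j) ++ al j | j <- s].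

Lemma blocks_incr i Z s : i \notin s -> blocks (incr i Z) s = blocks Z s.
Proof.
move=> i_notin_s; congr flatten; apply/eq_in_map => j j_in_s.
rewrite ffunE; case: eqP => [eq_ji | _]; last by rewrite addn0.
by rewrite -eq_ji j_in_s in i_notin_s.
Qed.

Variable i : 'I_k.

Definition Wpre Z := al0 ++ blocks Z (take (index i (enum 'I_k)) (enum 'I_k)).
Definition Wsuf Z := al i ++ blocks Z (drop (index i (enum 'I_k)).+1 (enum 'I_k)).

Lemma Wword_split Z : W Z = Wpre Z ++ wpow (u i) (om * Z i) ++ Wsuf Z.
Proof.
rewrite /Wword /Wpre /Wsuf /blocks -catA; congr (_ ++ _).
rewrite -{1}(cat_take_drop (index i (enum 'I_k)) (enum 'I_k)) map_cat flatten_cat.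
by rewrite drop_index ?mem_enum //= -!catA.
Qed.

Lemma notin_take_drop_index :
  i \notin take (index i (enum 'I_k)) (enum 'I_k) /\
  i \notin drop (index i (enum 'I_k)).+1 (enum 'I_k).
Proof.
have : i \notin rem i (enum 'I_k) by rewrite mem_rem_uniqF ?enum_uniq.
by rewrite remE mem_cat negb_or => /andP.
Qed.

Lemma Wpre_incr Z : Wpre (incr i Z) = Wpre Z.
Proof. by rewrite /Wpre blocks_incr //; case: notin_take_drop_index. Qed.

Lemma Wsuf_incr Z : Wsuf (incr i Z) = Wsuf Z.
Proof. by rewrite /Wsuf blocks_incr //; case: notin_take_drop_index. Qed.

Variables alpha beta : seq A.

Lemma rep_word_splitl X Y : rep_word alpha beta X Y =
  (alpha ++ wpow w (2 * om - 1) ++ Wpre X) ++ wpow (u i) (om * X i)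
  ++ (Wsuf X ++ wpow w (om - 1) ++ W Y ++ wpow w om ++ beta).
Proof. by rewrite /rep_word (Wword_split X) -!catA. Qed.

Lemma rep_word_splitr X Y : rep_word alpha beta X Y =
  (alpha ++ wpow w (2 * om - 1) ++ W X ++ wpow w (om - 1) ++ Wpre Y) ++ wpow (u i) (om * Y i)
  ++ (Wsuf Y ++ wpow w om ++ beta).
Proof. by rewrite /rep_word (Wword_split Y) -!catA. Qed.

End TestWord.

Section Bimachine.
Variables (A M : finType) (mul : M -> M -> M) (one : M) (mu : seq A -> M)
  (lam : M -> A -> M -> nat).
Hypotheses (mulA : associative mul) (mul1m : left_id one mul) (mulm1 : right_id one mul).
Hypotheses (mu_nil : mu [::] = one) (mu_cat : forall v w, mu (v ++ w) = mul (mu v) (mu w)).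

(* The value of the bimachine on w, read between a left context of image L and a
   right context of image R. *)
Fixpoint bimachine_ctx (L R : M) (w : seq A) : nat :=
  if w is a :: w' then lam L a (mul (mu w') R) + bimachine_ctx (mul L (mu [:: a])) R w'
  else 0.

Lemma bimachine_ctx_cat L R v w :
  bimachine_ctx L R (v ++ w) = bimachine_ctx L (mul (mu w) R) v + bimachine_ctx (mul L (mu v)) R w.
Proof.
elim: v L => [|a v IH] L /=; first by rewrite mu_nil mulm1.
by rewrite IH mu_cat -[a :: v]/([:: a] ++ v) mu_cat !mulA addnA.
Qed.

Lemma bimachine_ctxE x0 L R w : bimachine_ctx L R w =
  \sum_(i < size w) lam (mul L (mu (take i w))) (nth x0 w i) (mul (mu (drop i.+1 w)) R).
Proof.
elim: w L => [|a w IH] L /=; first by rewrite big_ord0.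
rewrite big_ord_recl /= mu_nil mulm1 drop0 IH; congr (_ + _); apply: eq_bigr => i _ /=.
by rewrite -[a :: take i w]/([:: a] ++ take i w) mu_cat mulA.
Qed.

Lemma bimachine_funE w : bimachine_fun mu lam w = bimachine_ctx one one w.
Proof.
case: w => [|a w]; first by rewrite /bimachine_fun big_ord0.
by rewrite (bimachine_ctxE a); apply: eq_bigr => i _; rewrite (tnth_nth a) mul1m mulm1.
Qed.

Lemma bimachine_insert P V Q :
  mul (mu P) (mu V) = mu P -> mul (mu V) (mu Q) = mu Q ->
  bimachine_ctx one one (P ++ V ++ Q)
  = bimachine_ctx one one (P ++ Q) + bimachine_ctx (mu P) (mu Q) V.
Proof.
move=> absP absQ; rewrite !bimachine_ctx_cat mu_cat absQ !mul1m !mulm1 absP.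
by rewrite addnAC addnA.
Qed.

Lemma mu_wpow v n : mu (wpow v n) = mpow mul one (mu v) n.
Proof. by elim: n => [|n IH]; rewrite ?mu_nil // -[wpow v _]/(v ++ wpow v n) mu_cat IH. Qed.

Variable om : nat.
Hypotheses (om_gt0 : 0 < om) (fact_dvd_om : #|M|`! %| om).

Lemma bimachine_pump L R v z : 1 < z ->
  bimachine_ctx one one (L ++ wpow v (om * z.+1) ++ R)
  = bimachine_ctx one one (L ++ wpow v (om * z) ++ R)
    + bimachine_ctx (mul (mu L) (mpow mul one (mu v) om)) (mul (mpow mul one (mu v) om) (mu R))
        (wpow v om).
Proof.
case: z => [|[|z]] // _.
have -> : om * z.+3 = om + (om + om * z.+1) by rewrite !mulnS.
have -> : om * z.+2 = om + om * z.+1 by rewrite mulnS.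
rewrite !wpowD -!catA !(catA L) bimachine_insert !mu_cat !mu_wpow ?mpow_mulnS //.
- by rewrite -mulA mpow_idem.
- by rewrite mulA mpow_idem.
Qed.

Variables (k : nat) (al0 : seq A) (u al : 'I_k -> seq A).
Local Notation W := (Wword om al0 u al).
Local Notation w := (W (fun _ => 1)).

Lemma mu_blocks Z s :
  (forall j, 0 < Z j) -> mu (blocks om u al Z s) = mu (blocks om u al (fun _ => 1) s).
Proof.
move=> Z_gt0; rewrite /blocks; elim: s => //= j s IH.
by rewrite !mu_cat IH !mu_wpow muln1 -(prednK (Z_gt0 j)) mpow_mulnS.
Qed.

Lemma mu_Wword Z : (forall j, 0 < Z j) -> mu (W Z) = mu w.
Proof. by move=> Z_gt0; rewrite !mu_cat mu_blocks. Qed.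

Lemma mu_Wpre i Z :
  (forall j, 0 < Z j) -> mu (Wpre om al0 u al i Z) = mu (Wpre om al0 u al i (fun _ => 1)).
Proof. by move=> Z_gt0; rewrite !mu_cat mu_blocks. Qed.

Lemma mu_Wsuf i Z :
  (forall j, 0 < Z j) -> mu (Wsuf om u al i Z) = mu (Wsuf om u al i (fun _ => 1)).
Proof. by move=> Z_gt0; rewrite !mu_cat mu_blocks. Qed.

Variables alpha beta : seq A.

Lemma mu_left_ctx i X Y : (forall j, 0 < X j) -> (forall j, 0 < Y j) ->
  mu (alpha ++ wpow w (2 * om - 1) ++ Wpre om al0 u al i X)
  = mu (alpha ++ wpow w (2 * om - 1) ++ W X ++ wpow w (om - 1) ++ Wpre om al0 u al i Y).
Proof.
move=> X_gt0 Y_gt0; rewrite [W X]lock [Wpre _ _ _ _ i X]lock [Wpre _ _ _ _ i Y]lock !mu_cat -!lock.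
rewrite mu_Wword // (mu_Wpre i X_gt0) (mu_Wpre i Y_gt0) !mu_wpow; congr (mul _ _).
by rewrite [mul (mu w) _]mulA mul_mpow_subn1 // mulA mpow_absorb //; lia.
Qed.

Lemma mu_right_ctx i X Y : (forall j, 0 < X j) -> (forall j, 0 < Y j) ->
  mu (Wsuf om u al i X ++ wpow w (om - 1) ++ W Y ++ wpow w om ++ beta)
  = mu (Wsuf om u al i Y ++ wpow w om ++ beta).
Proof.
move=> X_gt0 Y_gt0; rewrite [W Y]lock [Wsuf _ _ _ i X]lock [Wsuf _ _ _ i Y]lock !mu_cat -!lock.
rewrite mu_Wword // (mu_Wsuf i X_gt0) (mu_Wsuf i Y_gt0) !mu_wpow; congr (mul _ _).
by rewrite mulA mpow_subn1_mul // mulA mpow_idem.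
Qed.

Lemma bimachine_transfer :
  transfer_invariant 3 (fun X Y => bimachine_ctx one one (rep_word om al0 u al alpha beta X Y)).
Proof.
move=> i X Y X_ge3 Y_ge3 /=.
have X_gt0 j : 0 < X j by apply: leq_trans (X_ge3 j).
have Y_gt0 j : 0 < Y j by apply: leq_trans (Y_ge3 j).
rewrite [in LHS](rep_word_splitl om al0 u al i) [in RHS](rep_word_splitr om al0 u al i).
rewrite !Wpre_incr !Wsuf_incr !ffunE !eqxx !addn1.
rewrite !bimachine_pump ?(ltnW (X_ge3 i)) ?(ltnW (Y_ge3 i)) //.
rewrite -rep_word_splitl -rep_word_splitr.
by rewrite (mu_left_ctx i (X := X) (Y := Y)) ?(mu_right_ctx i (X := X) (Y := Y)).
Qed.

End Bimachine.

Definition shift_invariant (A : finType) (f : seq A -> nat) :=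
  exists2 om0, 0 < om0 & forall k om (alpha beta al0 : seq A) (u al : 'I_k -> seq A),
    0 < om -> om0 %| om ->
    transfer_invariant 3 (fun X Y => f (rep_word om al0 u al alpha beta X Y)).

Lemma regular_shift_invariant (A : finType) (f : seq A -> nat) :
  regular f -> shift_invariant f.
Proof.
case=> M [mul [one [mu [lam [[mulA mul1m mulm1] [[mu_nil mu_cat] fE]]]]]].
exists #|M|`!; first exact: fact_gt0.
move=> k om alpha beta al0 u al om_gt0 fact_dvd_om i X Y X_ge3 Y_ge3 /=.
rewrite !fE !(bimachine_funE _ mulA mul1m mulm1 mu_nil mu_cat).
exact: bimachine_transfer.
Qed.

Lemma shift_invariant_op (A : finType) (op : nat -> nat -> nat) (f g : seq A -> nat) :
  shift_invariant f -> shift_invariant g -> shift_invariant (fun w => op (f w) (g w)).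
Proof.
move=> [o1 o1_gt0 f_inv] [o2 o2_gt0 g_inv]; exists (o1 * o2); first by rewrite muln_gt0 o1_gt0.
move=> k om alpha beta al0 u al om_gt0 dvd_om i X Y X_ge3 Y_ge3 /=.
have dvd1 : o1 %| om by apply: dvdn_trans dvd_om; apply: dvdn_mulr.
have dvd2 : o2 %| om by apply: dvdn_trans dvd_om; apply: dvdn_mull.
by rewrite (f_inv _ _ _ _ _ _ _ om_gt0 dvd1) // (g_inv _ _ _ _ _ _ _ om_gt0 dvd2).
Qed.

Lemma polyblind_shift_invariant (A : finType) (f : seq A -> nat) :
  polyblind f -> shift_invariant f.
Proof.
elim=> [g /regular_shift_invariant //| g h _ g_inv _ h_inv | g h _ g_inv _ h_inv];
  exact: shift_invariant_op.
Qed.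

Lemma shift_invariant_repetitive (A : finType) (f : seq A -> nat) k :
  shift_invariant f -> k_repetitive k f.
Proof.
move=> [om0 om0_gt0 f_inv]; exists om0 => // alpha beta al0 u al om om_gt0 dvd_om W w.
exists (fun S => f (rep_word om al0 u al alpha beta [ffun=> 3] [ffun j => S j - 3])).
move=> X Y X_ge3 Y_ge3.
rewrite [LHS](transfer_invariant_sum (f_inv k om alpha beta al0 u al om_gt0 dvd_om)) //.
by congr (f (rep_word _ _ _ _ _ _ _ (fun_of_fin _))); apply: eq_ffun => j; rewrite ffunE.
Qed.

Theorem mainTheorem1 (A : finType) (f : seq A -> nat) :
  polyblind f -> forall k : nat, 1 <= k -> k_repetitive k f.
Proof.
move=> f_pb k _.
exact: shift_invariant_repetitive (polyblind_shift_invariant f_pb).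
Qed.
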